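(* Let $q\in(0,1)$, let $\lambda,\mu\in\mathbb C$ with $\lambda\ne q$, and let $t\in\mathbb{Z}_{\ge0}$. Then, as an identity of rational functions of $w_1,\dots,w_t$, $$\frac{q-\lambda q^t}{q-\lambda}+\sum_{i=0}^{t-1}T_{\sigma^-_{[1,i+1]}}\frac{(q-1)(\lambda-q\mu w_1)}{(q-\lambda)(1-\mu w_1)}=\prod_{i=1}^t\frac{1-q\mu w_i}{1-\mu w_i}.$$
   Context: $\sigma_i$ is the transposition of $i,i+1$; $\sigma^-_{[1,b]}=\sigma_{b-1}\sigma_{b-2}\cdots\sigma_1$ ($=\mathrm{id}$ for $b=1$). Operators on rational functions: $t_i$ swaps $w_i,w_{i+1}$; $T_i=q+\frac{w_{i+1}-qw_i}{w_{i+1}-w_i}(t_i-1)$; $T_{\sigma^-_{[1,b]}}=T_{b-1}T_{b-2}\cdots T_1$ (identity for $b=1$). *)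

From mathcomp Require Import all_boot all_order all_algebra.
From mathcomp Require Import complex.
From mathcomp Require Import reals.
Set Implicit Arguments. Unset Strict Implicit. Unset Printing Implicit Defensive.
Import Order.TTheory GRing.Theory Num.Theory.
Local Open Scope ring_scope.
Local Open Scope complex_scope.

Section Ops.
Variable R : realType.
Notation C := (R[i]).

(* A point (w_1, w_2, ...) ; only the coordinates w_1..w_t matter. *)
Definition swapw (i : nat) (w : nat -> C) : nat -> C :=
  fun k => if k == i then w i.+1 else if k == i.+1 then w i else w k.

Definition t_op (i : nat) (f : (nat -> C) -> C) : (nat -> C) -> C :=
  fun w => f (swapw i w).

Definition T_op (q : C) (i : nat) (f : (nat -> C) -> C) : (nat -> C) -> C :=
  fun w => q * f w +
    (w i.+1 - q * w i) / (w i.+1 - w i) * (t_op i f w - f w).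

(* T_{sigma^-_{[1,b]}} = T_{b-1} T_{b-2} ... T_1 (identity for b = 1) *)
Fixpoint T_down (q : C) (b : nat) (f : (nat -> C) -> C) : (nat -> C) -> C :=
  match b with
  | 0 => f
  | 1 => f
  | b'.+1 => T_op q b' (T_down q b' f)
  end.
End Ops.

(* Write h(x) = (1 - q mu x)/(1 - mu x) and F_b = h(w_1) ... h(w_b).  The one
   computation needed is how T_i acts on h(w_i):
     T_i h(w_i) = h(w_i) h(w_{i+1}) - h(w_i) + q.
   Since T_i is linear over functions symmetric in w_i, w_{i+1} and sends 1
   to q, induction on b gives
     T_{sigma^-_{[1,b+1]}} f = F_{b+1} - F_b - c q^b,  c = lam (1 - q)/(q - lam),
   for the function f of w_1 in the statement.  Summing over b telescopes to
   F_t - 1 - c (1 + q + ... + q^(t-1)), and the geometric sum cancels the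
   constant term. *)

From mathcomp Require Import all_boot all_order all_algebra.
From mathcomp Require Import complex.
From mathcomp Require Import reals.
From mathcomp Require Import ring zify.
Import GRing.Theory.
Set Implicit Arguments.
Unset Strict Implicit.
Local Open Scope ring_scope.
Local Open Scope complex_scope.

Section HeckeFactor.
Variables (F : fieldType) (q mu : F).

Definition hfac (x : F) : F := (1 - q * mu * x) / (1 - mu * x).

Definition hprod (n : nat) (v : nat -> F) : F := \prod_(1 <= i < n.+1) hfac (v i).

Lemma hprod0 (v : nat -> F) : hprod 0 v = 1.
Proof. by rewrite /hprod big_geq. Qed.

Lemma hprodS (n : nat) (v : nat -> F) : hprod n.+1 v = hprod n v * hfac (v n.+1).
Proof. by rewrite /hprod big_nat_recr. Qed.

Lemma hfac_Hecke (x y : F) : mu * x != 1 -> mu * y != 1 -> x != y ->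
  q * hfac x + (y - q * x) / (y - x) * (hfac y - hfac x)
  = hfac x * hfac y - hfac x + q.
Proof.
move=> hx hy hxy.
have hx' : 1 - mu * x != 0 by rewrite subr_eq0 eq_sym.
have hy' : 1 - mu * y != 0 by rewrite subr_eq0 eq_sym.
have hxy' : y - x != 0 by rewrite subr_eq0 eq_sym.
by rewrite /hfac; field; rewrite hx' hy' hxy'.
Qed.

End HeckeFactor.

Lemma geometric_telescope (F : fieldType) (q lam : F) (P : nat -> F) (t : nat) :
  q != lam -> P 0%N = 1 ->
  (q - lam * q ^+ t) / (q - lam) +
  \sum_(0 <= i < t) (P i.+1 - P i - lam * (1 - q) / (q - lam) * q ^+ i) = P t.
Proof.
move=> hql hP0.
have geom : q ^+ t = 1 - (1 - q) * \sum_(0 <= i < t) q ^+ i.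
  by rewrite big_mkord -[1 - q]opprB mulNr -subrX1 opprK addrC subrK.
rewrite sumrB telescope_sumr // hP0 -mulr_sumr geom.
by field; rewrite subr_eq0.
Qed.

Definition swap_nat (b i : nat) : nat :=
  if i == b then b.+1 else if i == b.+1 then b else i.

Lemma swap_natK (b : nat) : involutive (swap_nat b).
Proof. by move=> i; rewrite /swap_nat; repeat case: eqP; lia. Qed.

Lemma swap_nat_le (b t i : nat) : (1 <= b < t)%N -> (1 <= i <= t)%N ->
  (1 <= swap_nat b i <= t)%N.
Proof. by rewrite /swap_nat; repeat case: eqP; lia. Qed.

Lemma swapwE (R : realType) (b : nat) (v : nat -> R[i]) (i : nat) :
  swapw b v i = v (swap_nat b i).
Proof. by rewrite /swapw /swap_nat; case: (i == b); case: (i == b.+1). Qed.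

Lemma swapw_at (R : realType) (b : nat) (v : nat -> R[i]) : swapw b v b = v b.+1.
Proof. by rewrite /swapw eqxx. Qed.

Lemma hprod_swapw (R : realType) (q mu : R[i]) (b : nat) (v : nat -> R[i]) :
  hprod q mu b (swapw b.+1 v) = hprod q mu b v.
Proof.
apply: eq_big_nat => i /andP [_ hi]; rewrite swapwE /swap_nat.
by rewrite !ifN_eq //; lia.
Qed.

Section SeedUnderT.
Variables (R : realType) (q lam mu : R[i]) (t : nat).
Hypothesis hql : q != lam.

Definition admissible (v : nat -> R[i]) : Prop :=
  (forall i j : nat, (1 <= i <= t)%N -> (1 <= j <= t)%N -> i != j -> v i != v j)
  /\ (forall i : nat, (1 <= i <= t)%N -> mu * v i != 1).

Lemma admissible_swapw (b : nat) (v : nat -> R[i]) :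
  (1 <= b < t)%N -> admissible v -> admissible (swapw b v).
Proof.
move=> hb [hinj hmu]; split=> [i j hi hj hij|i hi]; rewrite !swapwE.
- by apply: hinj; rewrite ?swap_nat_le ?(inj_eq (inv_inj (swap_natK b))).
- by apply: hmu; rewrite swap_nat_le.
Qed.

Definition seed (v : nat -> R[i]) : R[i] :=
  (q - 1) * (lam - q * mu * v 1%N) / ((q - lam) * (1 - mu * v 1%N)).

Lemma T_down_seed (b : nat) (v : nat -> R[i]) : (b < t)%N -> admissible v ->
  T_down q b.+1 seed v
  = hprod q mu b.+1 v - hprod q mu b v - lam * (1 - q) / (q - lam) * q ^+ b.
Proof.
have hql' : q - lam != 0 by rewrite subr_eq0.
elim: b v => [|b IH] v hb hv.
  have hv1 : 1 - mu * v 1%N != 0 by rewrite subr_eq0 eq_sym hv.2.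
  by rewrite hprodS hprod0 /hfac /seed /=; field; rewrite hv1 hql'.
have hb' : (b < t)%N by lia.
have hsw : admissible (swapw b.+1 v) by apply: admissible_swapw.
have [hinj hmu] := hv.
rewrite -[LHS]/(T_op q b.+1 (T_down q b.+1 seed) v) /T_op /t_op !IH //.
rewrite !hprodS hprod_swapw swapw_at exprS.
set P := hprod q mu b v; set x := v b.+1; set y := v b.+2.
transitivity
  (P * (q * hfac q mu x + (y - q * x) / (y - x) * (hfac q mu y - hfac q mu x))
   - q * P - lam * (1 - q) / (q - lam) * (q * q ^+ b)); first ring.
rewrite hfac_Hecke; first ring.
- by apply: hmu; lia.
- by apply: hmu; lia.
- by apply: hinj; lia.
Qed.

End SeedUnderT.

Theorem lemma6p2 (R : realType) (q : R) (lam mu : R[i]) (t : nat)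
  (hq : 0 < q < 1) (hlam : lam != q%:C)
  (w : nat -> R[i])
  (hdist : forall i j : nat, (1 <= i <= t)%N -> (1 <= j <= t)%N -> i != j ->
             w i != w j)
  (hden : forall i : nat, (1 <= i <= t)%N -> mu * w i != 1) :
  (q%:C - lam * q%:C ^+ t) / (q%:C - lam) +
  \sum_(0 <= i < t)
     T_down q%:C i.+1
       (fun v => (q%:C - 1) * (lam - q%:C * mu * v 1%N) /
                 ((q%:C - lam) * (1 - mu * v 1%N))) w
  = \prod_(1 <= i < t.+1) ((1 - q%:C * mu * w i) / (1 - mu * w i)).
Proof.
have hql : q%:C != lam by rewrite eq_sym.
apply: etrans (@geometric_telescope _ _ _ (hprod q%:C mu ^~ w) t hql (hprod0 _ _ w)).
congr (_ + _); apply: eq_big_nat => i /andP [_ hi].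
by rewrite (T_down_seed (t := t) hql).
Qed.
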